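(* Let $\mathcal V$ be any subvariety of the variety of $\mathsf{FL}_{ew}$-algebras. Then the class of the $0$-free subreducts of algebras in $\mathcal V$ (i.e. subalgebras of the reducts to the signature $\{\vee,\wedge,\cdot,\to,1\}$) is a variety.
   Context: An $\mathsf{FL}_{ew}$-algebra is an algebra $\langle A,\vee,\wedge,\cdot,\to,0,1\rangle$ such that $\langle A,\vee,\wedge\rangle$ is a lattice with least element $0$ and greatest element $1$, $\langle A,\cdot,1\rangle$ is a commutative monoid, and $a\cdot b\le c$ iff $a\le b\to c$ for all $a,b,c$. *)

Record Alg6 : Type := {
  car6 :> Type;
  join6 : car6 -> car6 -> car6;
  meet6 : car6 -> car6 -> car6;
  mul6  : car6 -> car6 -> car6;
  imp6  : car6 -> car6 -> car6;
  zero6 : car6;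
  one6  : car6 }.

Record Alg5 : Type := {
  car5 :> Type;
  join5 : car5 -> car5 -> car5;
  meet5 : car5 -> car5 -> car5;
  mul5  : car5 -> car5 -> car5;
  imp5  : car5 -> car5 -> car5;
  one5  : car5 }.

Definition le6 (A : Alg6) (x y : A) : Prop := join6 A x y = y.

Definition is_FLew (A : Alg6) : Prop :=
  (forall x y, join6 A x y = join6 A y x) /\
  (forall x y, meet6 A x y = meet6 A y x) /\
  (forall x y z, join6 A x (join6 A y z) = join6 A (join6 A x y) z) /\
  (forall x y z, meet6 A x (meet6 A y z) = meet6 A (meet6 A x y) z) /\
  (forall x y, join6 A x (meet6 A x y) = x) /\
  (forall x y, meet6 A x (join6 A x y) = x) /\
  (forall x, le6 A (zero6 A) x) /\
  (forall x, le6 A x (one6 A)) /\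
  (forall x y z, mul6 A x (mul6 A y z) = mul6 A (mul6 A x y) z) /\
  (forall x y, mul6 A x y = mul6 A y x) /\
  (forall x, mul6 A x (one6 A) = x) /\
  (forall a b c, le6 A (mul6 A a b) c <-> le6 A a (imp6 A b c)).

Definition hom6 (A B : Alg6) (f : A -> B) : Prop :=
  (forall x y, f (join6 A x y) = join6 B (f x) (f y)) /\
  (forall x y, f (meet6 A x y) = meet6 B (f x) (f y)) /\
  (forall x y, f (mul6 A x y) = mul6 B (f x) (f y)) /\
  (forall x y, f (imp6 A x y) = imp6 B (f x) (f y)) /\
  f (zero6 A) = zero6 B /\
  f (one6 A) = one6 B.

Definition hom5 (A B : Alg5) (f : A -> B) : Prop :=
  (forall x y, f (join5 A x y) = join5 B (f x) (f y)) /\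
  (forall x y, f (meet5 A x y) = meet5 B (f x) (f y)) /\
  (forall x y, f (mul5 A x y) = mul5 B (f x) (f y)) /\
  (forall x y, f (imp5 A x y) = imp5 B (f x) (f y)) /\
  f (one5 A) = one5 B.

Definition injective {X Y : Type} (f : X -> Y) : Prop :=
  forall x y, f x = f y -> x = y.
Definition surjective {X Y : Type} (f : X -> Y) : Prop :=
  forall y, exists x, f x = y.

Definition prod6 (I : Type) (F : I -> Alg6) : Alg6 := {|
  car6 := forall i, F i;
  join6 := fun x y i => join6 (F i) (x i) (y i);
  meet6 := fun x y i => meet6 (F i) (x i) (y i);
  mul6  := fun x y i => mul6 (F i) (x i) (y i);
  imp6  := fun x y i => imp6 (F i) (x i) (y i);
  zero6 := fun i => zero6 (F i);
  one6  := fun i => one6 (F i) |}.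

Definition prod5 (I : Type) (F : I -> Alg5) : Alg5 := {|
  car5 := forall i, F i;
  join5 := fun x y i => join5 (F i) (x i) (y i);
  meet5 := fun x y i => meet5 (F i) (x i) (y i);
  mul5  := fun x y i => mul5 (F i) (x i) (y i);
  imp5  := fun x y i => imp5 (F i) (x i) (y i);
  one5  := fun i => one5 (F i) |}.

Definition variety6 (K : Alg6 -> Prop) : Prop :=
  (forall (A B : Alg6) (f : A -> B), K A -> hom6 A B f -> surjective f -> K B) /\
  (forall (A B : Alg6) (f : B -> A), K A -> hom6 B A f -> injective f -> K B) /\
  (forall (I : Type) (F : I -> Alg6), (forall i, K (F i)) -> K (prod6 I F)).

Definition variety5 (K : Alg5 -> Prop) : Prop :=
  (forall (A B : Alg5) (f : A -> B), K A -> hom5 A B f -> surjective f -> K B) /\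
  (forall (A B : Alg5) (f : B -> A), K A -> hom5 B A f -> injective f -> K B) /\
  (forall (I : Type) (F : I -> Alg5), (forall i, K (F i)) -> K (prod5 I F)).

Definition reduct (A : Alg6) : Alg5 := {|
  car5 := A; join5 := join6 A; meet5 := meet6 A; mul5 := mul6 A;
  imp5 := imp6 A; one5 := one6 A |}.

Definition zero_free_subreducts (V : Alg6 -> Prop) (B : Alg5) : Prop :=
  exists A : Alg6, V A /\ exists f : B -> reduct A, hom5 B (reduct A) f /\ injective f.

From Stdlib Require Import ClassicalEpsilon FunctionalExtensionality
  PropExtensionality ProofIrrelevance RelationClasses.

(* Closure under subalgebras (S) and products (P) is routine: compose the
   embeddings, resp. take the product of the ambient algebras of V.
   The substance is closure under homomorphic images (H).  Let f embed the
   0-free algebra B into the reduct of A in V and let g : B ->> C be onto.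
   The set D = f[g^-1(1)] is a multiplicative submonoid of A, and in any
   FL_ew-algebra a submonoid D induces the congruence
        x theta_D y  <->  c.x <= y and c.y <= x for some c in D.
   Using residuation one shows that the kernel of g is exactly the
   restriction of theta_D along f.  Hence C is isomorphic to the image of B
   in A / theta_D, which lies in V by (H); so C is a 0-free subreduct. *)

(* Quotients of a type by an equivalence relation: a class is a predicate
   of the form [R a]; [rep] picks a representative by choice. *)
Definition quotient (X : Type) (R : X -> X -> Prop) : Type :=
  {P : X -> Prop | exists a, P = R a}.

Definition cls {X : Type} (R : X -> X -> Prop) (a : X) : quotient X R :=
  exist _ (R a) (ex_intro _ a eq_refl).

Definition rep {X : Type} {R : X -> X -> Prop} (q : quotient X R) : X :=
  proj1_sig (constructive_indefinite_description _ (proj2_sig q)).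

Lemma cls_rep {X : Type} (R : X -> X -> Prop) (q : quotient X R) :
  cls R (rep q) = q.
Proof.
  apply eq_sig_hprop; [intros; apply proof_irrelevance|].
  unfold rep, cls; simpl.
  destruct (constructive_indefinite_description _ (proj2_sig q)) as [a Ha].
  simpl; symmetry; exact Ha.
Qed.

Lemma cls_eq_iff {X : Type} (R : X -> X -> Prop) `{Equivalence X R} (a b : X) :
  cls R a = cls R b <-> R a b.
Proof.
  split.
  - intro E. apply (f_equal (@proj1_sig _ _)) in E. simpl in E.
    rewrite E. reflexivity.
  - intro Hab. apply eq_sig_hprop; [intros; apply proof_irrelevance|]. simpl.
    apply functional_extensionality; intro x.
    apply propositional_extensionality; split; intro Hx.
    + symmetry in Hab. transitivity a; assumption.
    + transitivity b; assumption.
Qed.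

Lemma cls_surjective {X : Type} (R : X -> X -> Prop) : surjective (cls R).
Proof. intro q. exists (rep q). apply cls_rep. Qed.

Definition compatible6 (A : Alg6) (R : A -> A -> Prop) : Prop :=
  (forall a b a' b', R a b -> R a' b' -> R (join6 A a a') (join6 A b b')) /\
  (forall a b a' b', R a b -> R a' b' -> R (meet6 A a a') (meet6 A b b')) /\
  (forall a b a' b', R a b -> R a' b' -> R (mul6 A a a') (mul6 A b b')) /\
  (forall a b a' b', R a b -> R a' b' -> R (imp6 A a a') (imp6 A b b')).

Definition qalg (A : Alg6) (R : A -> A -> Prop) : Alg6 := {|
  car6 := quotient A R;
  join6 := fun p q => cls R (join6 A (rep p) (rep q));
  meet6 := fun p q => cls R (meet6 A (rep p) (rep q));
  mul6 := fun p q => cls R (mul6 A (rep p) (rep q));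
  imp6 := fun p q => cls R (imp6 A (rep p) (rep q));
  zero6 := cls R (zero6 A);
  one6 := cls R (one6 A) |}.

Lemma cls_hom (A : Alg6) (R : A -> A -> Prop) `{Equivalence A R} :
  compatible6 A R -> hom6 A (qalg A R) (cls R).
Proof.
  intros (Cj & Cm & Cu & Ci).
  assert (Rrep : forall x, R x (rep (cls R x))).
  { intro x. apply (cls_eq_iff R). symmetry. apply cls_rep. }
  repeat split; intros; simpl; apply (cls_eq_iff R); auto.
Qed.

Lemma hom6_reduct (A A' : Alg6) (q : A -> A') :
  hom6 A A' q -> hom5 (reduct A) (reduct A') q.
Proof. intros (qj & qm & qu & qi & _ & q1). repeat split; assumption. Qed.

Lemma hom5_comp (A B C : Alg5) (f : A -> B) (g : B -> C) :
  hom5 A B f -> hom5 B C g -> hom5 A C (fun x => g (f x)).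
Proof.
  intros (fj & fm & fu & fi & f1) (gj & gm & gu & gi & g1).
  repeat split; intros; simpl.
  - rewrite fj; apply gj.
  - rewrite fm; apply gm.
  - rewrite fu; apply gu.
  - rewrite fi; apply gi.
  - rewrite f1; apply g1.
Qed.

Lemma injective_comp {X Y Z : Type} (f : X -> Y) (g : Y -> Z) :
  injective f -> injective g -> injective (fun x => g (f x)).
Proof. intros Hf Hg x y E. apply Hf, Hg, E. Qed.

Lemma factor_through_surjection (B C X : Alg5) (g : B -> C) (k : B -> X) :
  hom5 B C g -> surjective g -> hom5 B X k ->
  (forall x y, g x = g y <-> k x = k y) ->
  exists h : C -> X, hom5 C X h /\ injective h.
Proof.
  intros (gj & gm & gu & gi & g1) Hsurj (kj & km & ku & ki & k1) Hker.
  set (h := fun z => k (proj1_sig (constructive_indefinite_description _ (Hsurj z)))).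
  assert (hg : forall x, h (g x) = k x).
  { intro x. unfold h.
    destruct (constructive_indefinite_description _ (Hsurj (g x))) as [x' Hx'].
    simpl. apply Hker, Hx'. }
  exists h. split.
  - repeat split; [intros z w..|].
    all: try (destruct (Hsurj z) as [x <-]; destruct (Hsurj w) as [y <-]).
    + rewrite <- gj, !hg. apply kj.
    + rewrite <- gm, !hg. apply km.
    + rewrite <- gu, !hg. apply ku.
    + rewrite <- gi, !hg. apply ki.
    + rewrite <- g1, hg. apply k1.
  - intros z w E.
    destruct (Hsurj z) as [x <-]. destruct (Hsurj w) as [y <-].
    rewrite !hg in E. apply Hker, E.
Qed.

Section FLew.

Variable A : Alg6.
Hypothesis HA : is_FLew A.

Local Notation "x ≤ y" := (le6 A x y) (at level 70).
Local Notation "x ⊔ y" := (join6 A x y) (at level 50, left associativity).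
Local Notation "x ⊓ y" := (meet6 A x y) (at level 40, left associativity).
Local Notation "x ⋅ y" := (mul6 A x y) (at level 40, left associativity).
Local Notation "x ⇒ y" := (imp6 A x y) (at level 45, right associativity).
Local Notation "1" := (one6 A).

Ltac flew_axiom :=
  unfold is_FLew in HA; decompose [and] HA;
  match goal with H : _ |- _ => solve [apply H] end.

Lemma join_comm x y : x ⊔ y = y ⊔ x.              Proof. flew_axiom. Qed.
Lemma meet_comm x y : x ⊓ y = y ⊓ x.              Proof. flew_axiom. Qed.
Lemma join_assoc x y z : x ⊔ (y ⊔ z) = x ⊔ y ⊔ z.  Proof. flew_axiom. Qed.
Lemma meet_assoc x y z : x ⊓ (y ⊓ z) = x ⊓ y ⊓ z.  Proof. flew_axiom. Qed.
Lemma join_meet_absorb x y : x ⊔ (x ⊓ y) = x.     Proof. flew_axiom. Qed.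
Lemma meet_join_absorb x y : x ⊓ (x ⊔ y) = x.     Proof. flew_axiom. Qed.
Lemma mul_assoc x y z : x ⋅ (y ⋅ z) = x ⋅ y ⋅ z.  Proof. flew_axiom. Qed.
Lemma mul_comm x y : x ⋅ y = y ⋅ x.               Proof. flew_axiom. Qed.
Lemma mul_one x : x ⋅ 1 = x.                      Proof. flew_axiom. Qed.
Lemma le_one x : x ≤ 1.                           Proof. flew_axiom. Qed.
Lemma residuation a b c : a ⋅ b ≤ c <-> a ≤ b ⇒ c. Proof. flew_axiom. Qed.

Lemma le_imp_of_mul a b c : a ⋅ b ≤ c -> a ≤ b ⇒ c.
Proof. exact (proj1 (residuation a b c)). Qed.

Lemma mul_le_of_le_imp a b c : a ≤ b ⇒ c -> a ⋅ b ≤ c.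
Proof. exact (proj2 (residuation a b c)). Qed.

Lemma le_refl x : x ≤ x.
Proof.
  unfold le6. rewrite <- (meet_join_absorb x x) at 2. apply join_meet_absorb.
Qed.

Lemma le_antisym x y : x ≤ y -> y ≤ x -> x = y.
Proof. unfold le6. intros H1 H2. rewrite <- H2, join_comm. exact H1. Qed.

Lemma le_trans x y z : x ≤ y -> y ≤ z -> x ≤ z.
Proof. unfold le6. intros H1 H2. rewrite <- H2, join_assoc, H1. reflexivity. Qed.

Lemma join_ub_l x y : x ≤ x ⊔ y.
Proof. unfold le6. rewrite join_assoc. f_equal. apply le_refl. Qed.

Lemma join_ub_r x y : y ≤ x ⊔ y.
Proof. rewrite join_comm. apply join_ub_l. Qed.

Lemma join_lub x y z : x ≤ z -> y ≤ z -> x ⊔ y ≤ z.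
Proof. unfold le6. intros H1 H2. rewrite <- join_assoc, H2, H1. reflexivity. Qed.

Lemma le_meet_iff x y : x ≤ y <-> x ⊓ y = x.
Proof.
  unfold le6. split; intro E.
  - rewrite <- E. apply meet_join_absorb.
  - rewrite <- E, join_comm, meet_comm. apply join_meet_absorb.
Qed.

Lemma meet_lb_l x y : x ⊓ y ≤ x.
Proof. unfold le6. rewrite join_comm. apply join_meet_absorb. Qed.

Lemma meet_lb_r x y : x ⊓ y ≤ y.
Proof. rewrite meet_comm. apply meet_lb_l. Qed.

Lemma meet_glb z x y : z ≤ x -> z ≤ y -> z ≤ x ⊓ y.
Proof.
  rewrite !le_meet_iff. intros H1 H2. rewrite meet_assoc, H1, H2. reflexivity.
Qed.

Lemma mul_mono_l a b c : a ≤ b -> a ⋅ c ≤ b ⋅ c.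
Proof.
  intro Hab. apply mul_le_of_le_imp, le_trans with b; [exact Hab|].
  apply le_imp_of_mul, le_refl.
Qed.

Lemma mul_mono_r a b c : a ≤ b -> c ⋅ a ≤ c ⋅ b.
Proof. rewrite (mul_comm c a), (mul_comm c b). apply mul_mono_l. Qed.

Lemma mul_le_l a b : a ⋅ b ≤ a.
Proof.
  rewrite <- (mul_one a) at 2. apply mul_mono_r, le_one.
Qed.

Lemma mul_le_r a b : a ⋅ b ≤ b.
Proof. rewrite mul_comm. apply mul_le_l. Qed.

Lemma modus_ponens b c : (b ⇒ c) ⋅ b ≤ c.
Proof. apply mul_le_of_le_imp, le_refl. Qed.

Lemma imp_one_l y : 1 ⇒ y = y.
Proof.
  apply le_antisym.
  - rewrite <- (mul_one (1 ⇒ y)). apply modus_ponens.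
  - apply le_imp_of_mul. rewrite mul_one. apply le_refl.
Qed.

Lemma imp_self y : y ⇒ y = 1.
Proof.
  apply le_antisym.
  - apply le_one.
  - apply le_imp_of_mul, mul_le_r.
Qed.

(* One-sided compatibility: if c.a <= b then c.(a op d) <= (b op d), and the
   analogues for the other argument; for implication the first argument is
   antitone, so the hypothesis is reversed. *)
Lemma mul_join_compat c a b d : c ⋅ a ≤ b -> c ⋅ (a ⊔ d) ≤ b ⊔ d.
Proof.
  intro Hab. rewrite mul_comm.
  apply mul_le_of_le_imp, join_lub; apply le_imp_of_mul.
  - rewrite mul_comm. apply le_trans with b; [exact Hab | apply join_ub_l].
  - apply le_trans with d; [apply mul_le_l | apply join_ub_r].
Qed.

Lemma mul_meet_compat c a b d : c ⋅ a ≤ b -> c ⋅ (a ⊓ d) ≤ b ⊓ d.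
Proof.
  intro Hab. apply meet_glb.
  - apply le_trans with (c ⋅ a); [apply mul_mono_r, meet_lb_l | exact Hab].
  - apply le_trans with (a ⊓ d); [apply mul_le_r | apply meet_lb_r].
Qed.

Lemma mul_mul_compat c a b d : c ⋅ a ≤ b -> c ⋅ (a ⋅ d) ≤ b ⋅ d.
Proof. intro Hab. rewrite mul_assoc. apply mul_mono_l, Hab. Qed.

Lemma mul_imp_compat_l c a b d : c ⋅ b ≤ a -> c ⋅ (a ⇒ d) ≤ b ⇒ d.
Proof.
  intro Hba. apply le_imp_of_mul.
  rewrite (mul_comm c), <- mul_assoc. apply le_trans with ((a ⇒ d) ⋅ a).
  - apply mul_mono_r, Hba.
  - apply modus_ponens.
Qed.

Lemma mul_imp_compat_r c a b d : c ⋅ a ≤ b -> c ⋅ (d ⇒ a) ≤ d ⇒ b.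
Proof.
  intro Hab. apply le_imp_of_mul.
  rewrite <- mul_assoc. apply le_trans with (c ⋅ a); [|exact Hab].
  apply mul_mono_r, modus_ponens.
Qed.

Section SubmonoidCongruence.

Variable D : A -> Prop.
Hypothesis D_one : D 1.
Hypothesis D_mul : forall c d, D c -> D d -> D (c ⋅ d).

Definition theta (x y : A) : Prop := exists c, D c /\ c ⋅ x ≤ y /\ c ⋅ y ≤ x.

Lemma theta_equivalence : Equivalence theta.
Proof.
  split.
  - intro a. exists 1. rewrite mul_comm, mul_one. auto using le_refl.
  - intros a b (c & Dc & H1 & H2). exists c. auto.
  - intros a b d (c1 & D1 & H1 & H1') (c2 & D2 & H2 & H2').
    exists (c1 ⋅ c2). split; [auto|]. split.
    + rewrite (mul_comm c1 c2), <- mul_assoc.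
      apply le_trans with (c2 ⋅ b); [apply mul_mono_r, H1 | exact H2].
    + rewrite <- mul_assoc.
      apply le_trans with (c1 ⋅ b); [apply mul_mono_r, H2' | exact H1'].
Qed.

Lemma theta_compat_binary (op : A -> A -> A) :
  (forall a b d, theta a b -> theta (op a d) (op b d)) ->
  (forall a b d, theta a b -> theta (op d a) (op d b)) ->
  forall a b a' b', theta a b -> theta a' b' -> theta (op a a') (op b b').
Proof.
  intros Hl Hr a b a' b' Hab Hab'.
  apply (@Equivalence_Transitive _ _ theta_equivalence) with (op b a'); auto.
Qed.

Lemma theta_compatible : compatible6 A theta.
Proof.
  repeat split; apply theta_compat_binary; intros a b d (c & Dc & H1 & H2);
    exists c; split; auto.
  - split; apply mul_join_compat; assumption.
  - rewrite !(join_comm d). split; apply mul_join_compat; assumption.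
  - split; apply mul_meet_compat; assumption.
  - rewrite !(meet_comm d). split; apply mul_meet_compat; assumption.
  - split; apply mul_mul_compat; assumption.
  - rewrite !(mul_comm d). split; apply mul_mul_compat; assumption.
  - split; apply mul_imp_compat_l; assumption.
  - split; apply mul_imp_compat_r; assumption.
Qed.

End SubmonoidCongruence.

Section KernelOfImage.

Variables B C : Alg5.
Variable f : B -> reduct A.
Hypothesis f_hom : hom5 B (reduct A) f.
Hypothesis f_inj : injective f.
Variable g : B -> C.
Hypothesis g_hom : hom5 B C g.

Definition kernel_filter (a : A) : Prop :=
  exists c, g c = one5 C /\ f c = a.

Lemma kernel_filter_one : kernel_filter 1.
Proof.
  exists (one5 B). split; [apply (proj2 (proj2 (proj2 (proj2 g_hom)))) |].
  apply (proj2 (proj2 (proj2 (proj2 f_hom)))).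
Qed.

(* 1.1 = 1 holds in C, being the image of an identity valid in B. *)
Lemma one_mul_one_C : mul5 C (one5 C) (one5 C) = one5 C.
Proof.
  destruct f_hom as (_ & _ & fu & _ & f1). destruct g_hom as (_ & _ & gu & _ & g1).
  rewrite <- g1, <- gu. f_equal. apply f_inj.
  rewrite fu, f1. apply mul_one.
Qed.

Lemma kernel_filter_mul c d :
  kernel_filter c -> kernel_filter d -> kernel_filter (c ⋅ d).
Proof.
  intros (x & gx & <-) (y & gy & <-). exists (mul5 B x y). split.
  - destruct g_hom as (_ & _ & gu & _ & _). rewrite gu, gx, gy. apply one_mul_one_C.
  - apply f_hom.
Qed.

Lemma kernel_is_theta x y : g x = g y <-> theta kernel_filter (f x) (f y).
Proof.
  destruct f_hom as (fj & fm & fu & fi & f1).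
  destruct g_hom as (gj & gm & gu & gi & g1).
  split.
  - (* witness (x => y).(y => x) *)
    intro E. exists (f (mul5 B (imp5 B x y) (imp5 B y x))). split.
    + exists (mul5 B (imp5 B x y) (imp5 B y x)). split; [|reflexivity].
      assert (imp_self_B : imp5 B y y = one5 B).
      { apply f_inj. rewrite fi, f1. apply imp_self. }
      rewrite gu, !gi, E, <- gi, imp_self_B, g1. apply one_mul_one_C.
    + rewrite fu, !fi. split.
      * apply le_trans with ((f x ⇒ f y) ⋅ f x);
          [apply mul_mono_l, mul_le_l | apply modus_ponens].
      * apply le_trans with ((f y ⇒ f x) ⋅ f y);
          [apply mul_mono_l, mul_le_r | apply modus_ponens].
  - (* from c.x <= y we get x = x /\ (c => y), and g maps c => y to g y *)
    intros (a & (c & gc & <-) & H1 & H2).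
    assert (image_meet : forall u v, f c ⋅ f u ≤ f v -> g u = g (meet5 B u v)).
    { intros u v Huv.
      assert (Eu : meet5 B u (imp5 B c v) = u).
      { apply f_inj. rewrite fm, fi. apply le_meet_iff.
        apply le_imp_of_mul. rewrite mul_comm. exact Huv. }
      assert (imp_one_B : imp5 B (one5 B) v = v).
      { apply f_inj. rewrite fi, f1. apply imp_one_l. }
      rewrite <- Eu at 1. rewrite gm, gi, gc, <- g1, <- gi, <- gm, imp_one_B.
      reflexivity. }
    rewrite (image_meet x y H1), (image_meet y x H2). f_equal.
    apply f_inj. rewrite !fm. apply meet_comm.
Qed.

End KernelOfImage.

End FLew.

Lemma subreducts_closed_H (V : Alg6 -> Prop)
  (HVH : forall (A B : Alg6) (f : A -> B), V A -> hom6 A B f -> surjective f -> V B)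
  (HVsub : forall A, V A -> is_FLew A)
  (B C : Alg5) (g : B -> C) :
  zero_free_subreducts V B -> hom5 B C g -> surjective g ->
  zero_free_subreducts V C.
Proof.
  intros (A & HA & f & f_hom & f_inj) g_hom g_surj.
  pose proof (HVsub A HA) as FL.
  set (D := kernel_filter A B C f g).
  set (R := theta A D).
  assert (D_one : D (one6 A)) by (apply kernel_filter_one; assumption).
  assert (D_mul : forall c d, D c -> D d -> D (mul6 A c d))
    by (apply kernel_filter_mul; assumption).
  assert (R_equiv : Equivalence R) by (apply theta_equivalence; assumption).
  assert (R_hom : hom6 A (qalg A R) (cls R))
    by (apply cls_hom; [exact R_equiv | apply theta_compatible; assumption]).
  exists (qalg A R). split.
  { apply (HVH A (qalg A R) (cls R)); [assumption .. | apply cls_surjective]. }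
  apply (factor_through_surjection B C (reduct (qalg A R)) g
           (fun x => cls R (f x) : reduct (qalg A R))); [assumption .. | |].
  - apply hom5_comp with (reduct A); [assumption | apply hom6_reduct, R_hom].
  - intros x y. rewrite (cls_eq_iff R). apply kernel_is_theta; assumption.
Qed.

Lemma subreducts_closed_S (V : Alg6 -> Prop) (B B' : Alg5) (e : B' -> B) :
  zero_free_subreducts V B -> hom5 B' B e -> injective e ->
  zero_free_subreducts V B'.
Proof.
  intros (A & HA & f & f_hom & f_inj) e_hom e_inj.
  exists A. split; [exact HA|]. exists (fun x => f (e x)). split.
  - apply hom5_comp with B; assumption.
  - apply injective_comp; assumption.
Qed.

Lemma subreducts_closed_P (V : Alg6 -> Prop)
  (HVP : forall (I : Type) (F : I -> Alg6), (forall i, V (F i)) -> V (prod6 I F))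
  (I : Type) (F : I -> Alg5) :
  (forall i, zero_free_subreducts V (F i)) -> zero_free_subreducts V (prod5 I F).
Proof.
  intro HF.
  assert (X : forall i, {A : Alg6 & {f : F i -> reduct A |
                V A /\ hom5 (F i) (reduct A) f /\ injective f}}).
  { intro i. destruct (constructive_indefinite_description _ (HF i)) as [A [HA Hf]].
    exists A. apply constructive_indefinite_description.
    destruct Hf as [f Hf]. exists f. tauto. }
  set (amb := fun i => projT1 (X i)).
  set (emb := fun i => proj1_sig (projT2 (X i))).
  assert (emb_spec : forall i, hom5 (F i) (reduct (amb i)) (emb i) /\ injective (emb i)).
  { intro i. apply (proj2 (proj2_sig (projT2 (X i)))). }
  exists (prod6 I amb). split.
  - apply HVP. intro i. apply (proj1 (proj2_sig (projT2 (X i)))).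
  - exists (fun (x : prod5 I F) i => emb i (x i)). split.
    + repeat split; intros; simpl; apply functional_extensionality_dep; intro i;
        destruct (emb_spec i) as [(ej & em & eu & ei & e1) _]; auto.
    + intros x y E. apply functional_extensionality_dep; intro i.
      apply (emb_spec i). exact (f_equal (fun k => k i) E).
Qed.

Theorem lemma2p10 (V : Alg6 -> Prop)
  (HV : variety6 V) (HVsub : forall A, V A -> is_FLew A) :
  variety5 (zero_free_subreducts V).
Proof.
  destruct HV as (HVH & _ & HVP).
  split; [|split].
  - intros B C g. apply subreducts_closed_H; assumption.
  - intros B B' e. apply subreducts_closed_S.
  - apply subreducts_closed_P, HVP.
Qed.
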